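(* Let $b(n)=\lfloor n\varphi\rfloor$, $c(n)=\lfloor n\varphi^2+\tfrac12\rfloor$, and $x(n)=a(b(n))-b(a(n))$. Then: (a) $a(b(n))\ge b(a(n))$ for all $n\ge0$. (b) For $n\ge1$, $x(n)$ equals the parity (number mod $2$) of the number of $1$'s in the Fibonacci representation of $n-1$. (c) $b(a(b(n)))\ge a(b(a(n)))$ for all $n\ge 0$. (d) $a(a(b(n)))-a(b(a(n)))\in\{-2,0,2\}$ for all $n\ge0$. (e) Setting $d(n)=c(a(n))-a(b(n))-a(n)$, we have $d(n)\in\{-1,0,1\}$ for all $n\ge0$. (f) For $n\ge1$, $d(n)=0$ if and only if $\mathbf f[n-1]=1$. (g) For $n\ge 1$, $c(a(b(n)))+a(b(n))-a(b(b(n)))-2\,b(a(n))=1$.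
   Context: $\varphi=(1+\sqrt5)/2$. Let $(F_n)_{n\ge 0}$ be the Fibonacci numbers: $F_0=0$, $F_1=1$, $F_n=F_{n-1}+F_{n-2}$ for $n\ge 2$. Define $(a(n))_{n\ge 0}$ (OEIS A105774) by $a(0)=0$, $a(1)=1$, and for $n\ge 2$, $a(n)=F_{j+1}-a(n-F_j)$, where $j\ge 2$ is the unique index with $F_j<n\le F_{j+1}$. The Fibonacci (Zeckendorf) representation of $m\ge0$ is the binary string $e_1\cdots e_t$ with no two consecutive $1$'s and $m=\sum_{i=1}^t e_iF_{t-i+2}$ (empty for $m=0$). $\mathbf f=\mathbf f[0]\mathbf f[1]\mathbf f[2]\cdots=01001010\cdots$ is the infinite Fibonacci word, the fixed point of the morphism $0\mapsto 01$, $1\mapsto 0$. *)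

From Stdlib Require Import Reals Lia ZArith Arith List.
Import ListNotations.

Fixpoint fib (n : nat) : nat :=
  match n with
  | 0 => 0
  | S m => match m with
           | 0 => 1
           | S k => fib m + fib k
           end
  end.

Fixpoint jsearch (fuel j n : nat) : nat :=
  match fuel with
  | 0 => j
  | S f => if Nat.leb n (fib (S j)) then j else jsearch f (S j) n
  end.

(* For n >= 2: the unique j >= 2 with F_j < n <= F_{j+1}
   (= the least j >= 2 with n <= F_{j+1}; fuel n suffices since F_{j+1} >= j). *)
Definition jidx (n : nat) : nat := jsearch n 2 n.

(* a(0)=0, a(1)=1, a(n) = F_{j+1} - a(n - F_j) for n >= 2 (OEIS A105774).
   Fuel: n - F_j < n, so fuel n suffices. *)
Fixpoint a_aux (fuel n : nat) : nat :=
  match fuel with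
  | 0 => 0
  | S f =>
      match n with
      | 0 => 0
      | 1 => 1
      | _ => fib (S (jidx n)) - a_aux f (n - fib (jidx n))
      end
  end.

Definition a (n : nat) : nat := a_aux n n.

Open Scope R_scope.
Definition phi : R := (1 + sqrt 5) / 2.

Definition b (n : nat) : nat := Z.to_nat (Int_part (INR n * phi)).
Definition c (n : nat) : nat := Z.to_nat (Int_part (INR n * phi ^ 2 + / 2)).
Close Scope R_scope.

Open Scope Z_scope.
Definition x (n : nat) : Z := Z.of_nat (a (b n)) - Z.of_nat (b (a n)).
Definition d (n : nat) : Z :=
  Z.of_nat (c (a n)) - Z.of_nat (a (b n)) - Z.of_nat (a n).
Close Scope Z_scope.

(* Fibonacci representation: a binary string e_1 ... e_t (true = 1), no two
   consecutive 1's, with value sum_i e_i F_{t-i+2}. *)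
Fixpoint no11 (s : list bool) : Prop :=
  match s with
  | true :: ((true :: _) as _) => False
  | _ :: t => no11 t
  | [] => True
  end.

Fixpoint fib_val (s : list bool) : nat :=
  match s with
  | [] => 0
  | e :: t => (if e then fib (length t + 2) else 0) + fib_val t
  end.

Definition fib_rep (m : nat) (s : list bool) : Prop := no11 s /\ fib_val s = m.

Definition count_ones (s : list bool) : nat := count_occ Bool.bool_dec s true.

(* The Fibonacci word: fixed point of 0 -> 01, 1 -> 0.  sigma^(k+1)(0) has
   length F_{k+3} > k and is a prefix of the fixed point, so f[k] is its k-th letter. *)
Definition sigma (w : list nat) : list nat :=
  flat_map (fun l => match l with 0 => [0; 1] | _ => [0] end) w.

Definition fword (k : nat) : nat := nth k (Nat.iter (S k) sigma [0]) 0.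

(* Write n = 1 + F_{e_1} + ... + F_{e_m} in Zeckendorf form (2 <= e_1, e_{i+1} >= e_i + 2).
   The recursion for a strips the largest Fibonacci number, so
   a(n) = +-(F_{e_1+1} - F_{e_2+1} + ... -+ F_{e_m+1} - 1), with sign + iff m is odd.
   Binet's formula F_{e+1} = phi F_e + (-tau)^e, tau = 1/phi, shows that b shifts every index
   by one, and that phi times such an alternating sum is the shifted alternating sum up to an
   alternating sum of powers of -tau of modulus < 1/2.  This error fixes the floors b(a n) and
   c(a n); for c it falls on either side of 1/2 - tau according as e_1 = 2 or not, i.e. as
   f[n-1] = 1 or not.  Every claim then becomes integer arithmetic in the parity of m. *)

From Pilot Require Import Defs.
From Stdlib Require Import Reals Lra Lia ZArith Arith List.
Import ListNotations.

Lemma fib_SS k : fib (S (S k)) = fib (S k) + fib k.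
Proof. reflexivity. Qed.

Lemma fib_pos k : 1 <= k -> 1 <= fib k.
Proof.
  induction k as [k IH] using lt_wf_ind; intros Hk.
  destruct k as [|[|[|k]]]; [lia | simpl; lia | simpl; lia |].
  rewrite fib_SS. specialize (IH (S (S k))). lia.
Qed.

Lemma fib_le_succ k : fib k <= fib (S k).
Proof. destruct k; [simpl; lia|]. rewrite fib_SS. lia. Qed.

Lemma fib_le_mono i j : i <= j -> fib i <= fib j.
Proof. induction 1; [lia|]. pose proof (fib_le_succ m). lia. Qed.

Lemma fib_succ_pred k : 1 <= k -> fib (S k) = fib k + fib (k - 1).
Proof. intros Hk. destruct k as [|k]; [lia|]. rewrite fib_SS, Nat.sub_1_r. reflexivity. Qed.

Lemma pred_le_fib k : k - 1 <= fib k.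
Proof.
  induction k as [k IH] using lt_wf_ind.
  destruct k as [|[|[|k]]]; [simpl; lia | simpl; lia | simpl; lia |].
  rewrite fib_SS. pose proof (IH (S (S k))). pose proof (fib_pos (S k)). lia.
Qed.

Lemma jsearch_ge fuel j n : j <= jsearch fuel j n.
Proof.
  revert j; induction fuel as [|fuel IH]; intros j; cbn [jsearch]; [lia|].
  destruct (n <=? fib (S j)); [lia|]. specialize (IH (S j)). lia.
Qed.

Lemma jsearch_spec fuel j n k : 2 <= j <= k -> k - j <= fuel ->
  fib k < n <= fib (S k) -> jsearch fuel j n = k.
Proof.
  revert j; induction fuel as [|fuel IH]; intros j Hjk Hfuel Hn; cbn [jsearch]; [lia|].
  destruct (Nat.leb_spec n (fib (S j))) as [Hj | Hj].
  - destruct (Nat.eq_dec j k); [assumption|].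
    pose proof (fib_le_mono (S j) k). lia.
  - apply IH; [| |assumption]; destruct (Nat.eq_dec j k); subst; lia.
Qed.

Lemma jidx_spec n k : 2 <= k -> fib k < n <= fib (S k) -> jidx n = k.
Proof.
  intros Hk Hn. apply jsearch_spec; [lia| |assumption].
  pose proof (pred_le_fib k). lia.
Qed.

Lemma jidx_ge n : 2 <= jidx n.
Proof. apply jsearch_ge. Qed.

Lemma fib_jidx_pos n : 1 <= fib (jidx n).
Proof. apply fib_pos. pose proof (jidx_ge n). lia. Qed.

Lemma a_aux_step f n : 2 <= n ->
  a_aux (S f) n = fib (S (jidx n)) - a_aux f (n - fib (jidx n)).
Proof. intros Hn. destruct n as [|[|n]]; [lia | lia | reflexivity]. Qed.

Lemma a_aux_fuel_succ f m : m <= f -> a_aux (S f) m = a_aux f m.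
Proof.
  revert m; induction f as [|f IH]; intros m Hm.
  - destruct m; [reflexivity|lia].
  - destruct m as [|[|m]]; try reflexivity.
    pose proof (fib_jidx_pos (S (S m))).
    rewrite !a_aux_step, IH by lia. reflexivity.
Qed.

Lemma a_aux_fuel f m : m <= f -> a_aux f m = a m.
Proof. induction 1; [reflexivity|]. rewrite a_aux_fuel_succ; assumption. Qed.

Lemma a_rec n : 2 <= n -> a n = fib (S (jidx n)) - a (n - fib (jidx n)).
Proof.
  intros Hn. destruct n as [|n]; [lia|].
  unfold a at 1. rewrite a_aux_step by lia. f_equal. apply a_aux_fuel.
  pose proof (fib_jidx_pos (S n)). lia.
Qed.

Lemma a_add_fib k m : 2 <= k -> 1 <= m <= fib (k - 1) -> a (m + fib k) = fib (S k) - a m.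
Proof.
  intros Hk Hm. pose proof (fib_succ_pred k). pose proof (fib_pos k).
  rewrite a_rec, (jidx_spec _ k) by lia.
  do 2 f_equal. lia.
Qed.

(* Zeckendorf representations are the index lists [L] with [sparse 2 L], read as [zsum L];
   indices increase along the list. *)
Fixpoint sparse (E : nat) (L : list nat) : Prop :=
  match L with
  | [] => True
  | e :: L' => E <= e /\ sparse (e + 2) L'
  end.

Fixpoint zsum (L : list nat) : nat :=
  match L with [] => 0 | e :: L' => fib e + zsum L' end.

Fixpoint altsum (L : list nat) : Z :=
  match L with [] => 0%Z | e :: L' => (Z.of_nat (fib (S e)) - altsum L')%Z end.

Definition signed (o : bool) (z : Z) : Z := if o then z else (- z)%Z.

Lemma sparse_weaken E E' L : E' <= E -> sparse E L -> sparse E' L.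
Proof. destruct L; simpl; intuition lia. Qed.

Lemma sparse_ge E L e : sparse E L -> In e L -> E <= e.
Proof.
  revert E; induction L as [|e0 L IH]; simpl; intros E HL He; [contradiction|].
  destruct HL as [HE HL], He as [<- | He]; [lia|]. specialize (IH _ HL He). lia.
Qed.

Lemma sparse_snoc E L k : sparse E (L ++ [k]) <->
  sparse E L /\ (forall e, In e L -> e + 2 <= k) /\ E <= k.
Proof.
  revert E; induction L as [|e0 L IH]; intros E; simpl.
  - intuition.
  - rewrite IH. split.
    + intros (HE & HL & Hlt & Hk). repeat split; try assumption; try lia.
      intros e [<- | He]; [lia | auto].
    + intros ((HE & HL) & Hlt & Hk). pose proof (Hlt e0 (or_introl eq_refl)).
      repeat split; auto; lia.
Qed.

Lemma sparse_map_S E L : sparse E L -> sparse (S E) (map S L).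
Proof.
  revert E; induction L as [|e L IH]; simpl; [auto|].
  intros E [HE HL]. split; [lia|]. apply (IH (e + 2) HL).
Qed.

Lemma zsum_snoc L k : zsum (L ++ [k]) = zsum L + fib k.
Proof. induction L; simpl; lia. Qed.

Lemma altsum_snoc L k :
  altsum (L ++ [k]) = (altsum L + signed (Nat.even (length L)) (Z.of_nat (fib (S k))))%Z.
Proof.
  induction L as [|e L IH]; [simpl; lia|].
  cbn [altsum app length]. rewrite IH, Nat.even_succ, <- Nat.negb_even.
  destruct (Nat.even (length L)); simpl; lia.
Qed.

Lemma zsum_le_fib E K L : sparse E L -> 1 <= E <= K + 2 -> (forall e, In e L -> e <= K) ->
  zsum L + fib (E - 1) <= fib (S K).
Proof.
  revert E; induction L as [|e L IH]; cbn [sparse zsum In]; intros E HL HE HK.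
  - apply fib_le_mono. lia.
  - destruct HL as [HEe HL]. pose proof (HK e (or_introl eq_refl)).
    specialize (IH (e + 2) HL ltac:(lia) (fun e' He' => HK e' (or_intror He'))).
    replace (e + 2 - 1) with (S e) in IH by lia.
    pose proof (fib_succ_pred e). pose proof (fib_le_mono (E - 1) (e - 1)). lia.
Qed.

Lemma zsum_lt_fib_last L k : sparse 2 (L ++ [k]) -> zsum L < fib (k - 1).
Proof.
  intros [HL [Hlt Hk]]%sparse_snoc.
  pose proof (zsum_le_fib 2 (k - 2) L HL).
  replace (S (k - 2)) with (k - 1) in H by lia. simpl in H.
  enough (zsum L + 1 <= fib (k - 1)) by lia.
  apply H; [lia|]. intros e He. specialize (Hlt e He). lia.
Qed.

Lemma a_zsum_snoc L k : sparse 2 (L ++ [k]) ->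
  a (zsum (L ++ [k]) + 1) = fib (S k) - a (zsum L + 1).
Proof.
  intros H. pose proof (zsum_lt_fib_last L k H).
  apply sparse_snoc in H as (_ & _ & Hk).
  rewrite zsum_snoc, <- a_add_fib by lia. f_equal. lia.
Qed.

Lemma a_zsum_le_fib L k : sparse 2 (L ++ [k]) -> a (zsum L + 1) <= fib (k - 1).
Proof.
  intros H. apply sparse_snoc in H as (HL & Hlt & Hk).
  destruct L as [|k' L _] using rev_ind.
  - apply fib_pos. lia.
  - rewrite a_zsum_snoc by exact HL.
    assert (k' + 2 <= k) by (apply Hlt, in_or_app; right; left; reflexivity).
    pose proof (fib_le_mono (S k') (k - 1)). lia.
Qed.

Lemma a_zsum_pos L : sparse 2 L -> 1 <= a (zsum L + 1).
Proof.
  intros H. destruct L as [|k L _] using rev_ind; [vm_compute; lia|].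
  pose proof (a_zsum_le_fib L k H).
  pose proof (proj2 (proj2 (proj1 (sparse_snoc _ _ _) H))).
  pose proof (fib_succ_pred k). pose proof (fib_pos k).
  rewrite a_zsum_snoc by exact H. lia.
Qed.

Lemma a_zsum L : sparse 2 L ->
  Z.of_nat (a (zsum L + 1)) = signed (Nat.odd (length L)) (altsum L - 1).
Proof.
  induction L as [|k L IH] using rev_ind; intros H; [reflexivity|].
  pose proof (a_zsum_le_fib L k H) as Hle.
  pose proof (proj1 (proj1 (sparse_snoc _ _ _) H)) as HL.
  pose proof (fib_le_mono (k - 1) (S k)).
  rewrite a_zsum_snoc, Nat2Z.inj_sub, IH, altsum_snoc, length_app by (auto || lia).
  rewrite Nat.add_1_r, Nat.odd_succ, <- Nat.negb_even.
  destruct (Nat.even (length L)); simpl; lia.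
Qed.

Fixpoint fib_indices (s : list bool) : list nat :=
  match s with
  | [] => []
  | e :: t => fib_indices t ++ (if e then [length t + 2] else [])
  end.

Lemma fib_indices_bound s e : In e (fib_indices s) -> 2 <= e <= length s + 1.
Proof.
  induction s as [|e0 t IH]; simpl; intros He; [contradiction|].
  apply in_app_or in He as [He | He]; [specialize (IH He); lia|].
  destruct e0; simpl in He; [destruct He as [<- | []]; lia | contradiction].
Qed.

Lemma no11_tail e t : no11 (e :: t) -> no11 t.
Proof. destruct e, t as [|[] t]; simpl; tauto. Qed.

Lemma sparse_fib_indices s : no11 s -> sparse 2 (fib_indices s).
Proof.
  induction s as [|e t IH]; simpl; intros H; [exact I|].
  specialize (IH (no11_tail _ _ H)).
  destruct e; [|rewrite app_nil_r; exact IH].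
  apply sparse_snoc. repeat split; [exact IH| |lia].
  intros e He. destruct t as [|[] t]; simpl in H; [contradiction | contradiction |].
  cbn [fib_indices] in He. rewrite app_nil_r in He.
  apply fib_indices_bound in He. simpl. lia.
Qed.

Lemma zsum_fib_indices s : zsum (fib_indices s) = fib_val s.
Proof.
  induction s as [|e t IH]; simpl; [reflexivity|].
  destruct e; simpl; [rewrite zsum_snoc | rewrite app_nil_r]; lia.
Qed.

Lemma length_fib_indices s : length (fib_indices s) = count_ones s.
Proof.
  induction s as [|e t IH]; [reflexivity|]. unfold count_ones in *; simpl.
  rewrite length_app, IH. destruct e; simpl; lia.
Qed.

Lemma fib_rep_exists_length j m : m < fib (j + 2) ->
  exists s, no11 s /\ fib_val s = m /\ length s = j.
Proof.
  revert m; induction j as [j IH] using lt_wf_ind; intros m Hm.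
  destruct j as [|[|j]].
  - exists []. simpl in *. repeat split; lia.
  - simpl in Hm. destruct m as [|[|m]]; [exists [false] | exists [true] | lia];
      simpl; repeat split; lia.
  - replace (S (S j) + 2) with (S (S (j + 2))) in Hm by lia. rewrite fib_SS in Hm.
    destruct (Nat.lt_ge_cases m (fib (S (j + 2)))) as [Hlt | Hge].
    + destruct (IH (S j) ltac:(lia) m) as (s & Hs & Hval & Hlen); [rewrite Nat.add_succ_l; exact Hlt|].
      exists (false :: s). cbn [no11 fib_val length]. repeat split; [exact Hs | exact Hval | lia].
    + destruct (IH j ltac:(lia) (m - fib (S (j + 2)))) as (s & Hs & Hval & Hlen); [lia|].
      exists (true :: false :: s). cbn [no11 fib_val length]. rewrite Hlen.
      replace (S (j + 2)) with (S j + 2) in * by lia. repeat split; [exact Hs | lia].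
Qed.

Lemma fib_rep_exists m : exists s, fib_rep m s.
Proof.
  destruct (fib_rep_exists_length m m) as (s & Hs & Hval & _).
  - pose proof (pred_le_fib (m + 2)). lia.
  - exists s. split; assumption.
Qed.

Lemma zeckendorf_exists m : exists L, sparse 2 L /\ zsum L = m.
Proof.
  destruct (fib_rep_exists m) as (s & Hs & Hval).
  exists (fib_indices s). split; [apply sparse_fib_indices, Hs | rewrite zsum_fib_indices; exact Hval].
Qed.

Open Scope R_scope.

Definition tau : R := phi - 1.

Lemma phi_tau : phi = 1 + tau.
Proof. unfold tau. ring. Qed.

Lemma tau_sq : tau ^ 2 = 1 - tau.
Proof. unfold tau, phi. pose proof (sqrt_sqrt 5 ltac:(lra)). nra. Qed.

Lemma tau_bounds : 0.6 < tau < 0.625.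
Proof.
  unfold tau, phi. pose proof (sqrt_sqrt 5 ltac:(lra)). pose proof (sqrt_pos 5).
  split; nra.
Qed.

Lemma tau_pow_SS k : tau ^ S (S k) = tau ^ k - tau ^ S k.
Proof. replace (S (S k)) with (k + 2)%nat by lia. rewrite pow_add, tau_sq. simpl. ring. Qed.

Lemma neg_tau_pow_SS k : (- tau) ^ S (S k) = (- tau) ^ k + (- tau) ^ S k.
Proof.
  replace (S (S k)) with (k + 2)%nat by lia. rewrite pow_add.
  replace ((- tau) ^ 2) with (tau ^ 2) by ring. rewrite tau_sq. simpl. ring.
Qed.

Lemma binet k : INR (fib (S k)) = phi * INR (fib k) + (- tau) ^ k.
Proof.
  induction k as [k IH] using lt_wf_ind.
  destruct k as [|[|k]]; [simpl; lra | rewrite phi_tau; simpl; lra |].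
  rewrite fib_SS, plus_INR, (IH (S k)), neg_tau_pow_SS, phi_tau by lia.
  apply Rminus_diag_uniq. simpl pow.
  transitivity ((1 - tau - tau ^ 2) * (INR (fib (S k)) - (- tau) ^ k)); [ring|].
  rewrite tau_sq. ring.
Qed.

Fixpoint tsum (L : list nat) : R :=
  match L with [] => 0 | e :: L' => (- tau) ^ e + tsum L' end.

Fixpoint alt_tsum (L : list nat) : R :=
  match L with [] => 0 | e :: L' => (- tau) ^ e - alt_tsum L' end.

Lemma zsum_shift L : INR (zsum (map S L)) = phi * INR (zsum L) + tsum L.
Proof.
  induction L as [|e L IH]; cbn [zsum map tsum]; [simpl; ring|].
  rewrite !plus_INR, IH, binet. ring.
Qed.

Lemma altsum_shift L : IZR (altsum (map S L)) = phi * IZR (altsum L) + alt_tsum (map S L).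
Proof.
  induction L as [|e L IH]; cbn [altsum map alt_tsum]; [simpl; ring|].
  rewrite !minus_IZR, IH, <- !INR_IZR_INZ, (binet (S e)). ring.
Qed.

Lemma neg_tau_pow_bounds m : -1 <= (- tau) ^ m <= 1.
Proof.
  pose proof tau_bounds. induction m as [|m IH]; simpl; [lra | nra].
Qed.

Lemma neg_tau_pow_mul_bounds m w W : (2 <= m)%nat -> 0 < w < W ->
  - (tau ^ 3 * W) < (- tau) ^ m * w < tau ^ 2 * W.
Proof.
  intros Hm Hw. pose proof tau_bounds.
  assert (Hsq : 0 < tau ^ 2) by (apply pow_lt; lra).
  assert (Hcube : 0 < tau ^ 3 <= tau ^ 2) by (simpl in *; nra).
  destruct m as [|[|[|m]]]; [lia | lia | |].
  { replace ((- tau) ^ 2 * w) with (tau ^ 2 * w) by ring. nra. }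
  pose proof (neg_tau_pow_bounds m).
  assert (Hq : - W < (- tau) ^ m * w < W) by nra.
  replace ((- tau) ^ S (S (S m)) * w) with (- tau ^ 3 * ((- tau) ^ m * w)) by (simpl; ring).
  nra.
Qed.

Lemma tsum_bounds K L : sparse (K + 2) L ->
  exists t, - tau ^ 2 < t < tau /\ tsum L = (- tau) ^ K * t.
Proof.
  revert K; induction L as [|e L IH]; intros K HL.
  - exists 0. pose proof tau_bounds. simpl. split; [nra | ring].
  - destruct HL as [HKe HL]. destruct (IH e HL) as (t & Ht & Heq).
    exists ((- tau) ^ (e - K) * (1 + t)). split.
    + pose proof tau_bounds. pose proof tau_sq.
      assert (tau ^ 3 * (1 + tau) = tau ^ 2 /\ tau ^ 2 * (1 + tau) = tau) as [E3 E2]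
        by (rewrite !tau_pow_SS; simpl; nra).
      pose proof (neg_tau_pow_mul_bounds (e - K) (1 + t) (1 + tau)) as B.
      rewrite E3, E2 in B. apply B; [lia | nra].
    + cbn [tsum]. rewrite Heq.
      replace ((- tau) ^ e) with ((- tau) ^ K * (- tau) ^ (e - K))
        by (rewrite <- pow_add; f_equal; lia).
      ring.
Qed.

Lemma alt_tsum_bounds K L : sparse (K + 2) L ->
  exists t, - tau / 2 < t < 1 / 2 /\ alt_tsum L = (- tau) ^ K * t.
Proof.
  revert K; induction L as [|e L IH]; intros K HL.
  - exists 0. pose proof tau_bounds. simpl. split; [lra | ring].
  - destruct HL as [HKe HL]. destruct (IH e HL) as (t & Ht & Heq).
    exists ((- tau) ^ (e - K) * (1 - t)). split.
    + pose proof tau_bounds. pose proof tau_sq.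
      assert (tau ^ 3 * (1 + tau / 2) = tau / 2 /\ tau ^ 2 * (1 + tau / 2) = 1 / 2) as [E3 E2]
        by (rewrite !tau_pow_SS; simpl; nra).
      pose proof (neg_tau_pow_mul_bounds (e - K) (1 - t) (1 + tau / 2)) as B.
      rewrite E3, E2 in B. specialize (B ltac:(lia) ltac:(lra)). lra.
    + cbn [alt_tsum]. rewrite Heq.
      replace ((- tau) ^ e) with ((- tau) ^ K * (- tau) ^ (e - K))
        by (rewrite <- pow_add; f_equal; lia).
      ring.
Qed.

Lemma phi_sq : phi ^ 2 = 2 + tau.
Proof. rewrite phi_tau. pose proof tau_sq. simpl in *. lra. Qed.

Lemma Int_part_spec r z : IZR z <= r < IZR z + 1 -> Int_part r = z.
Proof.
  intros [Hle Hlt]. unfold Int_part.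
  enough (up r = (z + 1)%Z) by lia.
  symmetry. apply tech_up; rewrite plus_IZR; simpl; lra.
Qed.

Lemma Z_to_nat_Int_part r z : 0 <= r -> IZR z <= r < IZR z + 1 ->
  Z.of_nat (Z.to_nat (Int_part r)) = z.
Proof.
  intros Hr Hz. rewrite (Int_part_spec r z Hz).
  assert (Hz0 : IZR (-1) < IZR z) by (simpl; lra).
  apply lt_IZR in Hz0. apply Z2Nat.id. lia.
Qed.

Lemma b_spec y z : IZR z <= INR y * phi < IZR z + 1 -> Z.of_nat (b y) = z.
Proof.
  apply Z_to_nat_Int_part. pose proof (pos_INR y). pose proof tau_bounds.
  rewrite phi_tau. nra.
Qed.

Lemma c_spec y z : IZR z <= INR y * phi ^ 2 + / 2 < IZR z + 1 -> Z.of_nat (c y) = z.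
Proof.
  apply Z_to_nat_Int_part. pose proof (pos_INR y). pose proof tau_bounds.
  rewrite phi_sq. nra.
Qed.

Lemma b_zsum L : sparse 2 L -> b (zsum L + 1) = (zsum (map S L) + 1)%nat.
Proof.
  intros HL. destruct (tsum_bounds 0 L HL) as (t & Ht & Heq).
  apply Nat2Z.inj, b_spec.
  rewrite Nat2Z.inj_add, plus_IZR, <- INR_IZR_INZ, !plus_INR, zsum_shift, Heq.
  rewrite tau_sq in Ht. rewrite phi_tau. simpl. lra.
Qed.

Lemma INR_signed o y z : Z.of_nat y = signed o z -> INR y = if o then IZR z else - IZR z.
Proof. intros H. rewrite INR_IZR_INZ, H. destruct o; [reflexivity | apply opp_IZR]. Qed.

Section Floor_signed.

Variables (o : bool) (y : nat) (B B' : Z) (T : R).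
Hypothesis Hy : Z.of_nat y = signed o (B - 1).
Hypothesis HB' : IZR B' = phi * IZR B + T.

Lemma b_signed : - tau < T < 1 - tau -> Z.of_nat (b y) = (signed o (B' - 1) - Z.b2z o)%Z.
Proof.
  intros HT. apply b_spec. rewrite (INR_signed _ _ _ Hy). rewrite phi_tau in *.
  destruct o; simpl; repeat rewrite ?minus_IZR, ?plus_IZR, ?opp_IZR; nra.
Qed.

Lemma c_signed_low : - / 2 - tau < T < / 2 - tau ->
  Z.of_nat (c y) = (Z.of_nat y + signed o (B' - 1))%Z.
Proof.
  intros HT. apply c_spec. rewrite Hy, phi_sq, (INR_signed _ _ _ Hy). rewrite phi_tau in *.
  destruct o; simpl; repeat rewrite ?minus_IZR, ?plus_IZR, ?opp_IZR; nra.
Qed.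

Lemma c_signed_high : / 2 - tau < T < 3 / 2 - tau ->
  Z.of_nat (c y) = (Z.of_nat y + signed o (B' - 1) - signed o 1)%Z.
Proof.
  intros HT. apply c_spec. rewrite Hy, phi_sq, (INR_signed _ _ _ Hy). rewrite phi_tau in *.
  destruct o; simpl; repeat rewrite ?minus_IZR, ?plus_IZR, ?opp_IZR; nra.
Qed.

End Floor_signed.

Close Scope R_scope.
Open Scope nat_scope.

Lemma sparse_hd_ne E L : sparse E L -> hd 0 L <> E -> sparse (S E) L.
Proof. destruct L as [|e L]; simpl; [auto|]. intros [HE HL] Hne. split; [lia | exact HL]. Qed.

Lemma sparse_2_map_S L : sparse 2 L -> sparse 2 (map S L).
Proof. intros HL. apply (sparse_weaken 3); [lia | exact (sparse_map_S 2 L HL)]. Qed.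

Lemma hd_map_S_ne_2 L : sparse 2 L -> hd 0 (map S L) <> 2.
Proof. destruct L as [|e L]; simpl; lia. Qed.

Lemma a_b_zsum L : sparse 2 L ->
  Z.of_nat (a (b (zsum L + 1))) = signed (Nat.odd (length L)) (altsum (map S L) - 1).
Proof.
  intros HL. rewrite b_zsum, a_zsum, length_map by (auto using sparse_2_map_S). reflexivity.
Qed.

Lemma alt_tsum_shift_bounds L : sparse 2 L ->
  (- tau / 2 < alt_tsum (map S L) < tau ^ 2 / 2)%R /\
  (hd 0 L = 2 -> (alt_tsum (map S L) < / 2 - tau)%R) /\
  (hd 0 L <> 2 -> (/ 2 - tau < alt_tsum (map S L))%R).
Proof.
  intros HL. pose proof tau_bounds. pose proof tau_sq.
  assert (Hcube : (tau ^ 3 = 2 * tau - 1)%R) by (rewrite tau_pow_SS; simpl; lra).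
  repeat split.
  - destruct (alt_tsum_bounds 1 (map S L) (sparse_map_S 2 L HL)) as (t & Ht & ->). simpl. nra.
  - destruct (alt_tsum_bounds 1 (map S L) (sparse_map_S 2 L HL)) as (t & Ht & ->). simpl in *. nra.
  - intros H2. destruct L as [|e L]; simpl in H2; [discriminate|]. subst e.
    destruct HL as [_ HL].
    destruct (alt_tsum_bounds 3 (map S L) (sparse_map_S 4 L HL)) as (t & Ht & Heq).
    cbn [map alt_tsum]. rewrite Heq.
    replace ((- tau) ^ 3)%R with (- tau ^ 3)%R by ring. nra.
  - intros H2. apply (sparse_hd_ne 2) in HL; [|exact H2].
    destruct (alt_tsum_bounds 2 (map S L) (sparse_map_S 3 L HL)) as (t & Ht & ->).
    replace ((- tau) ^ 2)%R with (tau ^ 2)%R by ring. nra.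
Qed.

Lemma b_a_zsum L : sparse 2 L ->
  b (a (zsum L + 1)) + Nat.b2n (Nat.odd (length L)) = a (b (zsum L + 1)).
Proof.
  intros HL. destruct (alt_tsum_shift_bounds L HL) as (HT & _).
  pose proof tau_bounds. pose proof tau_sq.
  apply Nat2Z.inj. rewrite Nat2Z.inj_add, a_b_zsum by exact HL.
  rewrite (b_signed _ _ _ _ _ (a_zsum L HL) (altsum_shift L)) by nra.
  destruct (Nat.odd (length L)); simpl; lia.
Qed.

Lemma c_a_zsum L : sparse 2 L ->
  Z.of_nat (c (a (zsum L + 1))) =
  (Z.of_nat (a (zsum L + 1)) + Z.of_nat (a (b (zsum L + 1)))
   - if (hd 0 L =? 2)%nat then 0 else signed (Nat.odd (length L)) 1)%Z.
Proof.
  intros HL. destruct (alt_tsum_shift_bounds L HL) as (HT & Hlow & Hhigh).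
  pose proof tau_bounds. pose proof tau_sq.
  pose proof (a_zsum L HL) as Hy. pose proof (altsum_shift L) as HB'.
  rewrite a_b_zsum by exact HL.
  destruct (Nat.eqb_spec (hd 0 L) 2) as [H2 | H2].
  - specialize (Hlow H2). rewrite (c_signed_low _ _ _ _ _ Hy HB') by lra. lia.
  - specialize (Hhigh H2). rewrite (c_signed_high _ _ _ _ _ Hy HB') by nra. lia.
Qed.

Lemma a_zsum_succ_sparse4 M : sparse 4 M -> a (zsum M + 2) = a (zsum M + 1).
Proof.
  intros HM. apply Nat2Z.inj.
  replace (zsum M + 2) with (zsum (2 :: M) + 1) by (simpl; lia).
  assert (sparse 2 M) by (apply (sparse_weaken 4); [lia | exact HM]).
  rewrite !a_zsum by (try split; auto).
  cbn [altsum length]. rewrite Nat.odd_succ, <- Nat.negb_even.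
  destruct (Nat.even (length M)); cbn [negb signed]; simpl fib; lia.
Qed.

Lemma a_zsum_succ_cons3 M : sparse 6 M ->
  Z.of_nat (a (zsum M + 4)) = (Z.of_nat (a (zsum M + 3)) - signed (Nat.odd (length M)) 2)%Z.
Proof.
  intros HM.
  replace (zsum M + 4) with (zsum (4 :: M) + 1) by (simpl; lia).
  replace (zsum M + 3) with (zsum (3 :: M) + 1) by (simpl; lia).
  assert (sparse 5 M) by (apply (sparse_weaken 6); [lia | exact HM]).
  rewrite !a_zsum by (split; [lia | auto]).
  cbn [altsum length]. rewrite Nat.odd_succ, <- Nat.negb_even.
  destruct (Nat.even (length M)); cbn [negb signed]; simpl fib; lia.
Qed.

Lemma a_succ_b_zsum Lw : sparse 2 Lw -> (forall r, Lw <> 2 :: 4 :: r) ->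
  let z := b (zsum Lw + 1) in
  let e := (Z.of_nat (a (z + 1)) - Z.of_nat (a z))%Z in
  e = (-2)%Z \/ e = 0%Z \/ e = 2%Z.
Proof.
  intros HLw Hne z e. subst z e. rewrite b_zsum by exact HLw.
  destruct (Nat.eq_dec (hd 0 Lw) 2) as [H2 | H2].
  - destruct Lw as [|e r]; simpl in H2; [discriminate|]. subst e.
    destruct HLw as [_ Hr]. apply (sparse_hd_ne 4) in Hr;
      [| destruct r as [|e r]; simpl; [lia | intros ->; exact (Hne r eq_refl)]].
    replace (zsum (map S (2 :: r)) + 1 + 1) with (zsum (map S r) + 4) by (simpl; lia).
    replace (zsum (map S (2 :: r)) + 1) with (zsum (map S r) + 3) by (simpl; lia).
    rewrite a_zsum_succ_cons3 by exact (sparse_map_S 5 r Hr).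
    destruct (Nat.odd _); simpl; lia.
  - apply (sparse_hd_ne 2), (sparse_map_S 3) in HLw; [|exact H2].
    rewrite <- Nat.add_assoc, a_zsum_succ_sparse4 by exact HLw. lia.
Qed.

(* The case excluded in [a_succ_b_zsum], where adding 1 to [zsum (3 :: 5 :: _)] carries,
   never occurs for [a n] when [n - 1] has a representation of odd length. *)
Lemma a_zsum_odd_ne_2_4 L r : sparse 2 L -> Nat.odd (length L) = true -> sparse 6 r ->
  a (zsum L + 1) <> zsum (2 :: 4 :: r) + 1.
Proof.
  intros HL Hodd Hr Heq.
  assert (Hr24 : sparse 2 (2 :: 4 :: r)) by (repeat split; auto).
  assert (Hz : Z.of_nat (zsum (2 :: 4 :: r)) = (altsum L - 2)%Z).
  { pose proof (a_zsum L HL) as Ha. rewrite Hodd, Heq in Ha. cbn [signed] in Ha. lia. }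
  assert (Hzs : Z.of_nat (zsum (map S (2 :: 4 :: r))) = (altsum (map S L) - 3)%Z).
  { pose proof (b_a_zsum L HL) as Hba. pose proof (a_b_zsum L HL) as Hab.
    rewrite Heq, b_zsum in Hba by exact Hr24. rewrite Hodd in Hab, Hba. cbn [signed Nat.b2n] in Hab, Hba. lia. }
  pose proof (zsum_shift (2 :: 4 :: r)) as Hs. rewrite !INR_IZR_INZ, Hz, Hzs, !minus_IZR in Hs.
  pose proof (altsum_shift L) as HB'.
  destruct (alt_tsum_shift_bounds L HL) as ((_ & HT) & _).
  destruct (tsum_bounds 4 r Hr) as (t & Ht & Htr).
  cbn [tsum] in Hs. rewrite Htr in Hs.
  pose proof tau_bounds. pose proof tau_sq.
  assert (E2 : ((- tau) ^ 2 = 1 - tau)%R) by (rewrite <- tau_sq; ring).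
  assert (E4 : ((- tau) ^ 4 = 2 - 3 * tau)%R).
  { replace ((- tau) ^ 4)%R with (tau ^ 4)%R by ring. rewrite !tau_pow_SS. simpl. lra. }
  rewrite E2, E4, phi_tau in Hs. rewrite phi_tau in HB'.
  assert (((2 - 3 * tau) * t > - (2 - 3 * tau) * (1 - tau))%R) by nra.
  nra.
Qed.

Definition fprefix (j : nat) : list nat := Nat.iter j Defs.sigma [0].

Lemma sigma_app u v : Defs.sigma (u ++ v) = Defs.sigma u ++ Defs.sigma v.
Proof. apply flat_map_app. Qed.

Lemma fprefix_SS j : fprefix (S (S j)) = fprefix (S j) ++ fprefix j.
Proof.
  induction j as [|j IH]; [reflexivity|].
  change (fprefix (S (S (S j)))) with (Defs.sigma (fprefix (S (S j)))).
  rewrite IH at 1. rewrite sigma_app. reflexivity.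
Qed.

Lemma length_fprefix j : length (fprefix j) = fib (j + 2).
Proof.
  induction j as [j IH] using lt_wf_ind. destruct j as [|[|j]]; [reflexivity | reflexivity |].
  rewrite fprefix_SS, length_app, !IH by lia.
  replace (S (S j) + 2) with (S (S (j + 2))) by lia.
  replace (S j + 2) with (S (j + 2)) by lia. reflexivity.
Qed.

Lemma nth_fprefix_mono j j' m : j <= j' -> m < length (fprefix j) ->
  nth m (fprefix j) 0 = nth m (fprefix j') 0.
Proof.
  induction 1 as [|j' Hj IH]; intros Hm; [reflexivity|]. rewrite IH by exact Hm.
  assert (Hm' : m < length (fprefix j')).
  { rewrite !length_fprefix in *. pose proof (fib_le_mono (j + 2) (j' + 2)). lia. }
  destruct j' as [|j']; [simpl in Hm'; destruct m; [reflexivity | lia]|].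
  rewrite fprefix_SS, app_nth1; [reflexivity | exact Hm'].
Qed.

Lemma fword_fprefix j m : m < length (fprefix j) -> fword m = nth m (fprefix j) 0.
Proof.
  intros Hm. unfold fword. change (Nat.iter (S m) Defs.sigma [0]) with (fprefix (S m)).
  assert (Hm' : m < length (fprefix (S m))).
  { rewrite length_fprefix. pose proof (pred_le_fib (S m + 2)). lia. }
  destruct (Nat.le_ge_cases j (S m)); [symmetry|]; apply nth_fprefix_mono; assumption.
Qed.

Lemma fword_add_fib k m : 3 <= k -> m < fib (k - 1) -> fword (m + fib k) = fword m.
Proof.
  intros Hk Hm.
  assert (Hsplit : fprefix (k - 1) = fprefix (k - 2) ++ fprefix (k - 3)).
  { replace (k - 1) with (S (S (k - 3))) by lia. rewrite fprefix_SS. do 3 f_equal. lia. }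
  assert (Hlen2 : length (fprefix (k - 2)) = fib k) by (rewrite length_fprefix; f_equal; lia).
  assert (Hlen3 : length (fprefix (k - 3)) = fib (k - 1)) by (rewrite length_fprefix; f_equal; lia).
  rewrite (fword_fprefix (k - 1)), Hsplit, app_nth2, Hlen2, Nat.add_sub by (rewrite ?Hsplit, ?length_app; lia).
  symmetry. apply fword_fprefix. lia.
Qed.

Lemma fword_zsum L : sparse 2 L -> fword (zsum L) = if hd 0 L =? 2 then 1 else 0.
Proof.
  induction L as [|k L IH] using rev_ind; intros H; [reflexivity|].
  pose proof (zsum_lt_fib_last L k H) as Hlt.
  apply sparse_snoc in H as (HL & Hgap & Hk).
  rewrite zsum_snoc.
  destruct (Nat.eq_dec k 2) as [-> | Hk2].
  - destruct L as [|e L]; [reflexivity|].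
    pose proof (Hgap e (or_introl eq_refl)). pose proof (sparse_ge 2 _ e HL (or_introl eq_refl)). lia.
  - rewrite fword_add_fib, IH by (auto || lia).
    destruct L as [|e L]; [|reflexivity].
    simpl. apply Nat.eqb_neq in Hk2. rewrite Hk2. reflexivity.
Qed.

Lemma zsum_succ_exists n : 1 <= n -> exists L, sparse 2 L /\ n = zsum L + 1.
Proof.
  intros Hn. destruct (zeckendorf_exists (n - 1)) as (L & HL & Hz).
  exists L. split; [exact HL | lia].
Qed.

Lemma b_0 : b 0 = 0.
Proof. apply Nat2Z.inj, b_spec. simpl. lra. Qed.

Lemma c_0 : c 0 = 0.
Proof. apply Nat2Z.inj, c_spec. simpl. lra. Qed.

Lemma Int_part_le_mono r1 r2 : (r1 <= r2)%R -> (Int_part r1 <= Int_part r2)%Z.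
Proof.
  intros H. destruct (base_Int_part r1) as [H1 _]. destruct (base_Int_part r2) as [_ H2].
  assert (Hlt : (IZR (Int_part r1) < IZR (Int_part r2 + 1))%R) by (rewrite plus_IZR; lra).
  apply lt_IZR in Hlt. lia.
Qed.

Lemma b_le_mono y1 y2 : y1 <= y2 -> b y1 <= b y2.
Proof.
  intros H. unfold b.
  enough (Int_part (INR y1 * phi) <= Int_part (INR y2 * phi))%Z by lia.
  apply Int_part_le_mono, Rmult_le_compat_r; [| apply le_INR, H].
  pose proof tau_bounds. rewrite phi_tau. lra.
Qed.

Lemma a_le_b m : a m <= b m.
Proof.
  destruct (Nat.eq_dec m 0) as [-> | Hm]; [rewrite b_0; reflexivity|].
  destruct (zsum_succ_exists m ltac:(lia)) as (L & HL & ->).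
  rewrite b_zsum by exact HL.
  destruct L as [|k L _] using rev_ind; [reflexivity|].
  rewrite a_zsum_snoc, map_app by exact HL. cbn [map]. rewrite zsum_snoc. lia.
Qed.

Lemma b2n_odd k : Nat.b2n (Nat.odd k) = k mod 2.
Proof. rewrite <- Nat.bit0_odd. apply Nat.bit0_mod. Qed.

Lemma x_zsum L : sparse 2 L -> x (zsum L + 1) = Z.of_nat (length L mod 2).
Proof. intros HL. unfold x. rewrite <- (b_a_zsum L HL), b2n_odd. lia. Qed.

Lemma d_zsum L : sparse 2 L ->
  d (zsum L + 1) = if hd 0 L =? 2 then 0%Z else (- signed (Nat.odd (length L)) 1)%Z.
Proof. intros HL. unfold d. rewrite c_a_zsum by exact HL. destruct (_ =? _); lia. Qed.

Lemma a_a_b_sub_a_b_a n :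
  let e := (Z.of_nat (a (a (b n))) - Z.of_nat (a (b (a n))))%Z in
  e = (-2)%Z \/ e = 0%Z \/ e = 2%Z.
Proof.
  intros e. subst e.
  destruct (Nat.eq_dec n 0) as [-> | Hn].
  { rewrite b_0. replace (a 0) with 0 by reflexivity. rewrite b_0. lia. }
  destruct (zsum_succ_exists n ltac:(lia)) as (L & HL & ->).
  pose proof (b_a_zsum L HL) as Hab.
  destruct (Nat.odd (length L)) eqn:Hodd; simpl in Hab; [| rewrite <- Hab, Nat.add_0_r; lia].
  pose proof (a_zsum_pos L HL) as Hpos.
  destruct (zsum_succ_exists _ Hpos) as (Lw & HLw & Hy).
  rewrite <- Hab, Hy.
  apply a_succ_b_zsum; [exact HLw|].
  intros r ->. destruct HLw as (_ & _ & Hr).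
  exact (a_zsum_odd_ne_2_4 L r HL Hodd Hr Hy).
Qed.

Lemma c_a_b_identity L : sparse 2 L ->
  let n := zsum L + 1 in
  (Z.of_nat (c (a (b n))) + Z.of_nat (a (b n)) - Z.of_nat (a (b (b n)))
   - 2 * Z.of_nat (b (a n)) = 1)%Z.
Proof.
  intros HL n. subst n.
  pose proof (b_a_zsum L HL) as Hba.
  rewrite b_zsum, c_a_zsum by (exact HL || apply sparse_2_map_S, HL).
  rewrite <- b_zsum by exact HL.
  rewrite (proj2 (Nat.eqb_neq _ _) (hd_map_S_ne_2 L HL)), length_map.
  destruct (Nat.odd (length L)); cbn [signed Nat.b2n] in *; lia.
Qed.

Lemma b_a_le_a_b n : b (a n) <= a (b n).
Proof.
  destruct (Nat.eq_dec n 0) as [-> | Hn].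
  { replace (a 0) with 0 by reflexivity. rewrite b_0. lia. }
  destruct (zsum_succ_exists n ltac:(lia)) as (L & HL & ->).
  rewrite <- (b_a_zsum L HL). lia.
Qed.

Lemma d_cases n : d n = (-1)%Z \/ d n = 0%Z \/ d n = 1%Z.
Proof.
  destruct (Nat.eq_dec n 0) as [-> | Hn].
  { unfold d. rewrite b_0. replace (a 0) with 0 by reflexivity. rewrite c_0. lia. }
  destruct (zsum_succ_exists n ltac:(lia)) as (L & HL & ->).
  rewrite d_zsum by exact HL. destruct (hd 0 L =? 2), (Nat.odd (length L)); cbn [signed]; lia.
Qed.

Theorem theorem22 :
  (* (a) *)
  (forall n : nat, b (a n) <= a (b n))%nat /\
  (* (b) *)
  (forall n : nat, (1 <= n)%nat ->
     (exists s, fib_rep (n - 1) s) /\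
     (forall s, fib_rep (n - 1) s -> x n = Z.of_nat (count_ones s mod 2))) /\
  (* (c) *)
  (forall n : nat, a (b (a n)) <= b (a (b n)))%nat /\
  (* (d) *)
  (forall n : nat, let e := (Z.of_nat (a (a (b n))) - Z.of_nat (a (b (a n))))%Z in
     e = (-2)%Z \/ e = 0%Z \/ e = 2%Z) /\
  (* (e) *)
  (forall n : nat, d n = (-1)%Z \/ d n = 0%Z \/ d n = 1%Z) /\
  (* (f) *)
  (forall n : nat, (1 <= n)%nat -> (d n = 0%Z <-> fword (n - 1) = 1%nat)) /\
  (* (g) *)
  (forall n : nat, (1 <= n)%nat ->
     (Z.of_nat (c (a (b n))) + Z.of_nat (a (b n)) - Z.of_nat (a (b (b n)))
       - 2 * Z.of_nat (b (a n)) = 1)%Z).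
Proof.
  split; [exact b_a_le_a_b|].
  split.
  { intros n Hn. split; [apply fib_rep_exists|]. intros s [Hs Hval].
    replace n with (zsum (fib_indices s) + 1) by (rewrite zsum_fib_indices; lia).
    rewrite x_zsum, length_fib_indices by (apply sparse_fib_indices, Hs). reflexivity. }
  split.
  { intros n. pose proof (b_le_mono _ _ (b_a_le_a_b n)). pose proof (a_le_b (b (a n))). lia. }
  split; [exact a_a_b_sub_a_b_a|].
  split; [exact d_cases|].
  split.
  { intros n Hn. destruct (zsum_succ_exists n Hn) as (L & HL & ->).
    rewrite Nat.add_sub, d_zsum, fword_zsum by exact HL.
    destruct (hd 0 L =? 2), (Nat.odd (length L)); cbn [signed]; split; congruence || lia. }
  intros n Hn. destruct (zsum_succ_exists n Hn) as (L & HL & ->).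
  exact (c_a_b_identity L HL).
Qed.
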